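(* Let $p,q$ be positive integers with $p+q$ odd. For every $n\ge2$, $$|\mathcal{J}^{p,q}_n|=\frac{2\,|\mathcal{J}^{p,q}_{n-1}|^2}{|D_{2^{\lfloor (n-1)/2\rfloor+1}}|}.$$
   Context: Let $p,q$ be positive integers with $p+q$ odd. $\mathbb{Z}_{2^k}$ denotes the integers modulo $2^k$ ($\mathbb{Z}_1$ trivial); as $p+q$ is odd, division by $p+q$ and $(p+q)^2$ is well defined in $\mathbb{Z}_{2^k}$. For $m\ge1$, $D_{2m}$ is the dihedral group of order $2m$, realized as pairs $(f,x)$, $f\in\mathbb{Z}_2$, $x\in\mathbb{Z}_m$, with product $(f_1,x_1)(f_2,x_2)=(f_1+f_2,x_1+(-1)^{f_1}x_2)$. Define $\Phi:D_{2m}\to D_{2m}$, $\Phi((f,x))=(f,\delta(f=1)(p+q)(p-q)-x)$, where $\delta(f=1)$ is $1$ if $f=1$ and $0$ otherwise. $\mathrm{Aut}(T_1)$ is trivial; for $k\ge1$, $\mathrm{Aut}(T_{k+1})$ is the set of triples $g=(g_f,g_L,g_R)$, $g_f\in\mathbb{Z}_2$, $g_L,g_R\in\mathrm{Aut}(T_k)$, with product $(f,A,B)(g,C,D)=(f+g,AC,BD)$ if $f=0$ and $(f+g,AD,BC)$ if $f=1$; subscripts chain ($g_{LR}=(g_L)_R$, $g_{Lf}=(g_L)_f$). Recursively: $\mathcal{J}_1=\mathrm{Aut}(T_2)$, $\psi_1=0$, $\Delta_1(g)=(g_f,0)$; $\mathcal{J}_2=\{g\in\mathrm{Aut}(T_3):g_L=g_R\}$,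 $\psi_2(g)=\delta(g_{Lf}=1)\in\mathbb{Z}_2$, $\Delta_2(g)=(g_f,\psi_2(g))$; for $n\ge3$, $\mathcal{J}_n=\{g\in\mathrm{Aut}(T_{n+1}):g_L,g_R\in\mathcal{J}_{n-1},\ \Delta_{n-1}(g_L)=\Phi(\Delta_{n-1}(g_R))\}$, with $\psi_n:\mathcal{J}_n\to\mathbb{Z}_{2^{\lfloor n/2\rfloor}}$ given by $\psi_n(g)=(\psi_{n-1}(g_L)+\psi_{n-1}(g_R))/(p+q)$ for odd $n$ and $\psi_n(g)=\big(2(\psi_{n-2}(g_{LL})+\psi_{n-2}(g_{RL}))-\delta(g_{Lf}=1)(p+q)(p-q)\big)/(p+q)^2$ for even $n$ (with $2\psi_{n-2}(\cdot)$ read in $\mathbb{Z}_{2^{n/2}}$), and $\Delta_n:\mathcal{J}_n\to D_{2^{\lfloor n/2\rfloor+1}}$ given by $\Delta_n(g)=(g_f,\psi_{n-1}(g_L)-\psi_{n-1}(g_R))$ for odd $n$ and $\Delta_n(g)=(g_f,(p+q)\psi_n(g)-2\psi_{n-1}(g_R))$ for even $n$. *)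

From mathcomp Require Import all_boot all_algebra.
Unset Printing Implicit Defensive.
Import GRing.Theory Num.Theory.
Local Open Scope ring_scope.

(* AutT k = Aut(T_{k+1}):  Aut(T_1) = unit (trivial),
   Aut(T_{k+2}) = triples (g_f, g_L, g_R) with g_f : Z_2 (bool), g_L,g_R in Aut(T_{k+1}).
   For g : AutT k.+1 :  g.1.1 = g_f,  g.1.2 = g_L,  g.2 = g_R. *)
Fixpoint AutT (k : nat) : finType :=
  match k with
  | 0 => Finite.clone unit _
  | S k => Finite.clone (bool * AutT k * AutT k)%type _
  end.

(* Elements of Z_{2^k} are represented by their canonical representative in
   [0, 2^k) (an int). *)
Definition zmod (k : nat) (x : int) : int := (x %% (2 ^ k)%:Z)%Z.

(* Division x / a in Z_{2^k} (a odd): the unique y in [0,2^k) with a*y = x mod 2^k. *)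
Definition zdiv (k : nat) (x a : int) : int :=
  (nth 0%N [seq y <- iota 0 (2 ^ k) | ((a * y%:Z - x) %% (2 ^ k)%:Z)%Z == 0] 0%N)%:Z.

(* Elements (f, x) of D_{2^{k+1}} = Z_2 x Z_{2^k}, represented as (f, canonical rep of x). *)
Definition dihedral_order (k : nat) : nat := #|{: bool * 'I_(2 ^ k)}|.

Section Construction.
Variables p q : nat.

Definition PQ : int := (p + q)%:Z.
Definition cPQ : int := ((p + q)%:Z * (p%:Z - q%:Z)).

Definition Phi (k : nat) (d : bool * int) : bool * int :=
  (d.1, zmod k ((if d.1 then cPQ else 0) - d.2)).

(* psi n : J_n -> Z_{2^{floor(n/2)}}, defined on all of Aut(T_{n+1}) = AutT n.
   psi 1 = 0;  psi 2 g = delta(g_{Lf} = 1);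
   odd n >= 3:  psi n g = (psi_{n-1}(g_L) + psi_{n-1}(g_R)) / (p+q);
   even n >= 4: psi n g = (2(psi_{n-2}(g_LL) + psi_{n-2}(g_RL)) - delta(g_Lf=1)(p+q)(p-q)) / (p+q)^2.
   (prev = psi (n-1), pprev = psi (n-2) below.) *)
Fixpoint psi (n : nat) : AutT n -> int :=
  match n return AutT n -> int with
  | 0 => fun _ => 0
  | S m =>
    (match m as m' return (AutT m' -> int) -> AutT m'.+1 -> int with
     | 0 => fun _ _ => 0
     | S k => fun prev =>
       (match k as k' return
          (AutT k'.+1 -> int) -> (AutT k' -> int) -> AutT k'.+2 -> int with
        | 0 => fun _ _ g => if g.1.2.1.1 then 1 else 0
        | S _ => fun prev pprev g =>
            if odd n then
              zdiv (n./2) (prev (g.1.2) + prev (g.2)) PQ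
            else
              zdiv (n./2)
                (2 * (pprev (g.1.2.1.2) + pprev (g.2.1.2))
                   - (if g.1.2.1.1 then cPQ else 0))
                (PQ * PQ)
        end) prev (psi k)
     end) (psi m)
  end.

(* Delta n : J_n -> D_{2^{floor(n/2)+1}}:
   Delta 1 g = (g_f, 0);  Delta 2 g = (g_f, psi_2(g));
   odd n >= 3:  (g_f, psi_{n-1}(g_L) - psi_{n-1}(g_R));
   even n >= 4: (g_f, (p+q) psi_n(g) - 2 psi_{n-1}(g_R)). *)
Definition Delta (n : nat) : AutT n -> bool * int :=
  match n return AutT n -> bool * int with
  | 0 => fun _ => (false, 0)
  | 1 => fun g => (g.1.1, 0)
  | 2 => fun g => (g.1.1, psi 2 g)
  | S (S (S j)) => fun g =>
      if odd j.+3 then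
        (g.1.1, zmod (j.+3)./2 (psi j.+2 (g.1.2) - psi j.+2 (g.2)))
      else
        (g.1.1, zmod (j.+3)./2 (PQ * psi j.+3 g - 2 * psi j.+2 (g.2)))
  end.

(* Membership in J_n (a subset of Aut(T_{n+1}) = AutT n), for n >= 1:
   J_1 = Aut(T_2);  J_2 = {g | g_L = g_R};
   n >= 3: g_L, g_R in J_{n-1} and Delta_{n-1}(g_L) = Phi(Delta_{n-1}(g_R))
   (Phi acting on D_{2^{floor((n-1)/2)+1}}).  (prev = inJ (n-1) below.) *)
Fixpoint inJ (n : nat) : AutT n -> bool :=
  match n return AutT n -> bool with
  | 0 => fun _ => true (* J_0 is not used *)
  | S m =>
    (match m as m' return (AutT m' -> bool) -> AutT m'.+1 -> bool with
     | 0 => fun _ _ => true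
     | S k =>
       (match k as k' return (AutT k'.+1 -> bool) -> AutT k'.+2 -> bool with
        | 0 => fun _ g => g.1.2 == g.2
        | S j => fun prev g =>
            [&& prev (g.1.2), prev (g.2) &
                Delta j.+2 (g.1.2) == Phi (j.+2)./2 (Delta j.+2 (g.2))]
        end)
     end) (inJ m)
  end.

Definition J (n : nat) : {set AutT n} := [set g | inJ n g].

End Construction.

From mathcomp Require Import all_boot all_algebra.
From mathcomp Require Import zify ring.
Import GRing.Theory Num.Theory.
Local Open Scope ring_scope.

(* For g in Aut(T_(k+3)) put Y = psi_(k+1)(g_R), X = psi_(k+1)(g_L) if k is odd
   and X = psi_(k+2)(g) if k is even, and call (g_f, X, Y) the signature of g.
   It determines Delta_(k+2)(g), and the signature of a node (f, L, R) is a
   function of f and of the signatures of L and R.  By induction on k, every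
   value of Z_2 x [0, 2^((k+2)/2)) x [0, 2^((k+1)/2)) is the signature of the
   same number C_k of elements of J_(k+2).  For the induction step, fix a
   signature at level k+1 and count the pairs of child signatures satisfying
   Delta(g_L) = Phi(Delta(g_R)): since p+q and (p+q)(p-q) are odd, the
   conditions are congruences modulo powers of 2 that determine all but one free
   coordinate, leaving 2^((k+1)/2) solutions; thus C_(k+1) = C_k^2 2^((k+1)/2).
   Counting J_(k+2) fibre by fibre gives |J_(k+2)| = 2 C_k 2^((k+2)/2) 2^((k+1)/2),
   and the identity follows. *)

Section ResiduesModPow2.

Variable k : nat.
Local Notation M := (2 ^ k)%:Z.

Lemma pow2_gt0 : 0 < M.
Proof. by rewrite ltz_nat expn_gt0. Qed.

Lemma zmod_range x : 0 <= zmod k x < M.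
Proof. have := pow2_gt0; rewrite /zmod; lia. Qed.

Lemma eq_zmod x y : (zmod k x == zmod k y) = (M %| x - y)%Z.
Proof. exact: eqz_mod_dvd. Qed.

Lemma zmod_small x : 0 <= x < M -> zmod k x = x.
Proof. exact: modz_small. Qed.

Lemma zmod_id x : zmod k (zmod k x) = zmod k x.
Proof. exact: modz_mod. Qed.

Lemma dvd_pow2_zmod x : (M %| x - zmod k x)%Z.
Proof. by rewrite -eq_zmod zmod_id. Qed.

Lemma zmod_residue x y : 0 <= y < M -> (M %| y - x)%Z = (y == zmod k x).
Proof. by move=> y_small; rewrite -eq_zmod zmod_small. Qed.

Lemma zmod_subr x y : zmod k (x - zmod k y) = zmod k (x - y).
Proof.
apply/eqP; rewrite eq_zmod.
have -> : (x - zmod k y) - (x - y) = y - zmod k y by ring.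
exact: dvd_pow2_zmod.
Qed.

Lemma coprimez_pow2 a : ~~ (2 %| a)%Z -> coprimez a M.
Proof.
move=> a_odd; rewrite coprimezE /= coprime_sym coprimeXl //.
by rewrite coprime2n; move: a_odd; rewrite dvdzE dvdn2 negbK.
Qed.

Lemma dvd_pow2_mul_odd a x : ~~ (2 %| a)%Z -> (M %| a * x)%Z = (M %| x)%Z.
Proof. by move=> a_odd; rewrite Gauss_dvdzr // coprimez_sym coprimez_pow2. Qed.

(* For odd [a] the congruence [a * y = x] has the single solution [u * x mod 2^k]
   in [0, 2^k), where [u] is a Bezout inverse of [a]. *)
Lemma zdiv_eq x a y : ~~ (2 %| a)%Z -> 0 <= y < M ->
  (zdiv k x a == y) = (M %| a * y - x)%Z.
Proof.
move=> a_odd y_small.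
have [u [v]] := Bezoutz a M; move: (coprimez_pow2 _ a_odd); rewrite /coprimez => /eqP-> uv1.
pose y0 := zmod k (u * x).
have solP z : 0 <= z < M -> (M %| a * z - x)%Z = (z == y0).
  move=> z_small; rewrite -zmod_residue // -(dvd_pow2_mul_odd _ (z - u * x) a_odd).
  have ua : u * a = 1 - v * M by rewrite -uv1; ring.
  have -> : a * (z - u * x) = (a * z - x) + x * v * M.
    by rewrite mulrBr mulrA (mulrC a u) ua; ring.
  by rewrite [in RHS]rpredDr // dvdz_mull.
have y0_small : 0 <= y0 < M := zmod_range (u * x).
have y0_nat : (absz y0)%:Z = y0 by rewrite gez0_abs //; case/andP: y0_small.
have -> : zdiv k x a = y0.
  rewrite /zdiv (@eq_in_filter _ _ (pred1 (absz y0))) => [|z].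
    rewrite filter_pred1_uniq ?iota_uniq //= mem_iota add0n -ltz_nat y0_nat.
    by case/andP: y0_small.
  rewrite mem_iota add0n -ltz_nat => z_lt /=.
  have -> : ((a * z%:Z - x) %% M == 0)%Z = (M %| a * z%:Z - x)%Z by apply/eqP/dvdz_mod0P.
  by rewrite solP ?ler0n // -y0_nat eqz_nat.
by rewrite solP // eq_sym.
Qed.

Lemma zdiv_range x a : 0 <= zdiv k x a < M.
Proof.
rewrite /zdiv ltz_nat /=.
have : all (fun y => y < 2 ^ k)%N [seq y <- iota 0 (2 ^ k) | ((a * y%:Z - x) %% M == 0)%Z].
  by apply/allP => y; rewrite mem_filter mem_iota => /andP[_ /andP[]].
by case: (filter _ _) => [|y s] /=; [rewrite expn_gt0 | case/andP].
Qed.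

End ResiduesModPow2.

Lemma dvdz_eq_shift (d x y : int) : (d %| x - y)%Z -> (d %| x)%Z = (d %| y)%Z.
Proof. by move=> dxy; rewrite -(subrK y x) rpredDl. Qed.

Lemma pow2S k : (2 ^ k.+1)%:Z = 2 * (2 ^ k)%:Z.
Proof. by rewrite expnS PoszM. Qed.

Lemma sum_unique_int (N : nat) (P : int -> bool) (b : int) : 0 <= b < N%:Z ->
  (forall i : nat, (i < N)%N -> P i%:Z = (i%:Z == b)) ->
  (\sum_(i < N) P i%:Z = 1)%N.
Proof.
move=> b_range Pb; have b_nat : (absz b)%:Z = b by rewrite gez0_abs //; case/andP: b_range.
have b_lt : (absz b < N)%N by rewrite -ltz_nat b_nat; case/andP: b_range.
rewrite (bigD1 (Ordinal b_lt)) //= big1 => [|i ne_ib]; rewrite Pb ?ltn_ord //=.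
  by rewrite b_nat eqxx.
case: eqP => // ib; case/eqP: ne_ib; apply: val_inj.
by rewrite /= -ib.
Qed.

Lemma count_residues k T : (\sum_(y < 2 ^ k) ((2 ^ k)%:Z %| (y%:Z - T)%R)%Z = 1)%N.
Proof.
apply: (@sum_unique_int _ (fun x => (2 ^ k)%:Z %| x - T)%Z _ (zmod_range k T)) => y y_lt.
by rewrite zmod_residue // ler0n ltz_nat.
Qed.

Lemma count_half_residues k W :
  (\sum_(y < 2 ^ k) ((2 ^ k.+1)%:Z %| (W - 2 * y%:Z)%R)%Z = (2 %| W)%Z)%N.
Proof.
have [/dvdzP[w ->] | W_odd] := boolP (2 %| W)%Z.
  apply: (@sum_unique_int _ (fun x => (2 ^ k.+1)%:Z %| w * 2 - 2 * x)%Z _ (zmod_range k w)).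
  move=> y y_lt.
  rewrite -zmod_residue ?ler0n ?ltz_nat // pow2S (mulrC w) -mulrBr dvdz_mul2l //.
  by rewrite -opprB rpredN.
rewrite big1 // => y _; apply/eqP; rewrite eqb0; apply: contra W_odd => dvd.
rewrite -(subrK (2 * y%:Z) W) rpredD ?dvdz_mulr //.
by apply: dvdz_trans dvd; rewrite pow2S dvdz_mulr.
Qed.

Lemma odd_mulz (a b : int) : ~~ (2 %| a)%Z -> ~~ (2 %| b)%Z -> ~~ (2 %| a * b)%Z.
Proof. by rewrite !dvdzE abszM Euclid_dvdM // negb_or => -> ->. Qed.

Lemma count_parity (c Z : int) : ~~ (2 %| c)%Z ->
  (\sum_(e : bool) (2 %| (Z + (if e then c else 0))%R)%Z = 1)%N.
Proof.
move=> c_odd; rewrite big_bool /= addr0.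
have -> : (2 %| Z + c)%Z = ~~ (2 %| Z)%Z by apply/idP/idP; lia.
by case: (2 %| Z)%Z.
Qed.

Lemma sum_pred1 (I : finType) (i0 : I) (F : I -> nat) :
  (\sum_i ((i == i0) * F i) = F i0)%N.
Proof.
rewrite (bigD1 i0) //= eqxx mul1n big1 ?addn0 // => i /negbTE ->.
exact: mul0n.
Qed.

Lemma sum_andbr (I : finType) (F : I -> bool) (b : bool) :
  (\sum_i (F i && b) = (\sum_i F i) * b)%N.
Proof.
case: b; last by rewrite muln0 big1 // => i _; rewrite andbF.
by rewrite muln1; apply: eq_bigr => i _; rewrite andbT.
Qed.

Lemma count_eq (I : finType) (i0 : I) : (\sum_i (i0 == i) = 1)%N.
Proof.
rewrite (eq_bigr (fun i => (i == i0) * 1)%N) ?sum_pred1 // => i _.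
by rewrite muln1 eq_sym.
Qed.

Lemma count_eq_int (N : nat) (b : int) : 0 <= b < N%:Z -> (\sum_(x < N) (x%:Z == b) = 1)%N.
Proof. by move=> b_range; apply: (@sum_unique_int _ (fun x => x == b) _ b_range). Qed.

Lemma card_pred_sum (T : finType) (P : pred T) : #|[pred t | P t]| = (\sum_t P t)%N.
Proof. by rewrite -sum1_card big_mkcond; apply: eq_bigr => t _; rewrite inE; case: (P t). Qed.

Lemma sum_triple (A B C : finType) (F : A * B * C -> nat) :
  (\sum_(g : A * B * C) F g = \sum_a \sum_b \sum_c F (a, b, c))%N.
Proof.
transitivity (\sum_(ab : A * B) \sum_(c : C) F (ab, c))%N.
  by rewrite pair_bigA; apply: eq_bigr => -[].
by rewrite (pair_bigA _ (fun a b => \sum_c F (a, b, c))%N); apply: eq_bigr => -[].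
Qed.

Section Fibres.

Context {T : finType} {U : eqType} (r : seq U) (P : pred T) (h : T -> U).

Definition equidistributed (C : nat) :=
  (forall t, P t -> h t \in r) /\
  (forall u, u \in r -> #|[pred t | P t & h t == u]| = C).

Lemma sum_equidistributed C (F : U -> nat) : uniq r -> equidistributed C ->
  (\sum_(t | P t) F (h t) = C * \sum_(u <- r) F u)%N.
Proof.
move=> r_uniq [h_r fibreC]; rewrite big_distrr /=.
rewrite (eq_big_seq (fun u => \sum_(t | P t && (h t == u)) F u)); last first.
  by move=> u u_r; rewrite -(fibreC u u_r) sum_nat_const.
rewrite (exchange_big_dep P) => [|u t _ /andP[] //]; apply: eq_bigr => t Pt.
rewrite Pt -big_filter (@eq_filter _ _ (pred1 (h t))) => [|u]; last exact: eq_sym.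
by rewrite filter_pred1_uniq ?h_r // big_seq1.
Qed.

End Fibres.

Section Box.

Variables X Y : nat.

Definition box_point (v : bool * 'I_X * 'I_Y) : bool * int * int :=
  (v.1.1, (v.1.2 : nat)%:Z, (v.2 : nat)%:Z).

Definition box : seq (bool * int * int) := [seq box_point v | v : bool * 'I_X * 'I_Y].

Lemma big_box (F : bool * int * int -> nat) :
  (\sum_(v <- box) F v = \sum_(e : bool) \sum_(x < X) \sum_(y < Y) F (e, x%:Z, y%:Z))%N.
Proof.
by rewrite big_image pair_bigA pair_bigA; apply: eq_bigl.
Qed.

Lemma box_uniq : uniq box.
Proof.
rewrite map_inj_uniq ?enum_uniq // => -[[e x] y] [[e' x'] y'].
by case=> -> /val_inj-> /val_inj->.
Qed.

Lemma mem_box v : (v \in box) = (0 <= v.1.2 < X%:Z) && (0 <= v.2 < Y%:Z).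
Proof.
case: v => [[e x] y] /=; apply/mapP/idP => [[[[e' x'] y'] _ [_ -> ->]] | ].
  by rewrite !ltz_nat !ltn_ord.
case/andP=> /andP[x_ge0 x_lt] /andP[y_ge0 y_lt].
have x_ord : (absz x < X)%N by rewrite -ltz_nat gez0_abs.
have y_ord : (absz y < Y)%N by rewrite -ltz_nat gez0_abs.
by exists (e, Ordinal x_ord, Ordinal y_ord); rewrite ?mem_enum // /box_point /= !gez0_abs.
Qed.

Lemma size_box : size box = (2 * X * Y)%N.
Proof. by rewrite size_map -cardE !card_prod card_bool !card_ord. Qed.

End Box.

Section OddLevelCount.

Variables (P c s t : int) (j : nat) (e : bool).
Hypothesis c_odd : ~~ (2 %| c)%Z.

Let even_at (eL : bool) := (2 %| (P * P * s + (if eL then c else 0))%R)%Z.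

Lemma count_odd_level_inner (f eL : bool) (xL yL : int) :
  (\sum_(eR : bool) \sum_(xR < 2 ^ j) \sum_(yR < 2 ^ j)
     [&& ((2 ^ j)%:Z %| (yR%:Z - (P * t - xR%:Z))%R)%Z,
         ((2 ^ j.+1)%:Z %| ((P * P * s + (if eL then c else 0) - 2 * xL) - 2 * xR%:Z)%R)%Z,
         eL == eR, ((2 ^ j)%:Z %| (yL - (P * P * s - xL - P * t))%R)%Z & f == e] =
   [&& ((2 ^ j)%:Z %| (yL - (P * P * s - xL - P * t))%R)%Z, even_at eL & e == f])%N.
Proof.
under eq_bigr => eR _ do under eq_bigr => xR _ do rewrite sum_andbr count_residues mul1n.
under eq_bigr => eR _ do rewrite sum_andbr count_half_residues.
rewrite -big_distrr /= sum_andbr count_eq mul1n mulnb andbCA eq_sym.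
by congr (nat_of_bool (_ && _)); rewrite /even_at; apply/idP/idP; lia.
Qed.

(* [yR], [yL] and [eR] are determined, [xR] exists iff [even_at eL], which
   singles out [eL], and [xL] is free. *)
Lemma count_odd_level :
  (\sum_(f : bool) \sum_(eL : bool) \sum_(xL < 2 ^ j) \sum_(yL < 2 ^ j)
   \sum_(eR : bool) \sum_(xR < 2 ^ j) \sum_(yR < 2 ^ j)
     [&& ((2 ^ j)%:Z %| (yR%:Z - (P * t - xR%:Z))%R)%Z,
         ((2 ^ j.+1)%:Z %| ((P * P * s + (if eL then c else 0) - 2 * xL%:Z) - 2 * xR%:Z)%R)%Z,
         eL == eR, ((2 ^ j)%:Z %| (yL%:Z - (P * P * s - xL%:Z - P * t))%R)%Z & f == e] = 2 ^ j)%N.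
Proof.
under eq_bigr => f _ do under eq_bigr => eL _ do under eq_bigr => xL _ do
  under eq_bigr => yL _ do rewrite count_odd_level_inner.
under eq_bigr => f _ do under eq_bigr => eL _ do under eq_bigr => xL _ do
  rewrite sum_andbr count_residues mul1n.
under eq_bigr => f _ do under eq_bigr => eL _ do rewrite sum_nat_const card_ord.
under eq_bigr => f _ do rewrite -big_distrr /= sum_andbr count_parity // mul1n.
by rewrite -big_distrr /= count_eq muln1.
Qed.

End OddLevelCount.

Section EvenLevelCount.

Variables (P c a b : int) (m : nat) (e : bool).
Hypotheses (c_odd : ~~ (2 %| c)%Z) (a_range : 0 <= a < (2 ^ m.+1)%:Z)
  (b_range : 0 <= b < (2 ^ m.+1)%:Z).

Let even_at (eL : bool) := (2 %| (P * a + P * b + (if eL then c else 0))%R)%Z.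

Lemma count_even_level_inner (f eL : bool) (xL yL : int) :
  (\sum_(eR : bool) \sum_(xR < 2 ^ m.+1) \sum_(yR < 2 ^ m)
     [&& ((2 ^ m.+1)%:Z %| ((P * a - 2 * yL - (if eL then c else 0) + P * b) - 2 * yR%:Z)%R)%Z,
         xR%:Z == b, eL == eR, xL == a & f == e] =
   [&& xL == a, even_at eL & e == f])%N.
Proof.
under eq_bigr => eR _ do under eq_bigr => xR _ do rewrite sum_andbr count_half_residues.
under eq_bigr => eR _ do rewrite -big_distrr /= sum_andbr count_eq_int // mul1n.
rewrite -big_distrr /= sum_andbr count_eq mul1n mulnb andbCA eq_sym.
by congr (nat_of_bool (_ && _)); rewrite /even_at; apply/idP/idP; lia.
Qed.

(* [xL], [xR] and [eR] are determined, [yR] exists iff [even_at eL], which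
   singles out [eL], and [yL] is free. *)
Lemma count_even_level :
  (\sum_(f : bool) \sum_(eL : bool) \sum_(xL < 2 ^ m.+1) \sum_(yL < 2 ^ m)
   \sum_(eR : bool) \sum_(xR < 2 ^ m.+1) \sum_(yR < 2 ^ m)
     [&& ((2 ^ m.+1)%:Z %| ((P * a - 2 * yL%:Z - (if eL then c else 0) + P * b) - 2 * yR%:Z)%R)%Z,
         xR%:Z == b, eL == eR, xL%:Z == a & f == e] = 2 ^ m)%N.
Proof.
under eq_bigr => f _ do under eq_bigr => eL _ do under eq_bigr => xL _ do
  under eq_bigr => yL _ do rewrite count_even_level_inner.
under eq_bigr => f _ do under eq_bigr => eL _ do under eq_bigr => xL _ do
  rewrite sum_nat_const card_ord.
under eq_bigr => f _ do under eq_bigr => eL _ do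
  rewrite -big_distrr /= sum_andbr count_eq_int // mul1n.
under eq_bigr => f _ do rewrite -big_distrr /= sum_andbr count_parity // mul1n.
by rewrite -big_distrr /= count_eq muln1.
Qed.

End EvenLevelCount.

Lemma sum_AutT_node k (F : AutT k.+1 -> nat) :
  (\sum_g F g = \sum_(f : bool) \sum_(L : AutT k) \sum_(R : AutT k) F (f, L, R))%N.
Proof. exact: (@sum_triple bool (AutT k) (AutT k) F). Qed.

Lemma sum_AutT0 (F : AutT 0 -> nat) : (\sum_u F u = F tt)%N.
Proof. by rewrite (bigD1 tt) //= big1 ?addn0 // => -[]. Qed.

Lemma sum_AutT1 (F : AutT 1 -> nat) : (\sum_g F g = F (true, tt, tt) + F (false, tt, tt))%N.
Proof. by rewrite sum_AutT_node big_bool !sum_AutT0. Qed.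

Section Recursion.
Context {p q : nat} (pq_odd : odd (p + q)).

Local Notation psi := (psi p q).
Local Notation Delta := (Delta p q).
Local Notation inJ := (inJ p q).
Local Notation PQ := (PQ p q).
Local Notation cPQ := (cPQ p q).

Lemma PQ_odd : ~~ (2 %| PQ)%Z.
Proof. by rewrite /PQ dvdzE /= dvdn2 negbK. Qed.

Lemma PQ2_odd : ~~ (2 %| PQ * PQ)%Z.
Proof. exact: odd_mulz PQ_odd PQ_odd. Qed.

Lemma cPQ_odd : ~~ (2 %| cPQ)%Z.
Proof. by apply: odd_mulz PQ_odd _; have := PQ_odd; rewrite /PQ; lia. Qed.

Lemma psi_node k (g : AutT k.+3) : psi k.+3 g =
  if odd k.+3 then zdiv (k.+3)./2 (psi k.+2 g.1.2 + psi k.+2 g.2) PQ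
  else zdiv (k.+3)./2 (2 * (psi k.+1 g.1.2.1.2 + psi k.+1 g.2.1.2)
                       - (if g.1.2.1.1 then cPQ else 0)) (PQ * PQ).
Proof. by []. Qed.

Definition signature k (g : AutT k.+2) : bool * int * int :=
  (g.1.1, if odd k then psi k.+1 g.1.2 else psi k.+2 g, psi k.+1 g.2).

Definition delta_of k (v : bool * int * int) : bool * int :=
  (v.1.1, zmod (k.+2)./2 (if odd k then v.1.2 - v.2 else PQ * v.1.2 - 2 * v.2)).

Lemma odd_add2 k : odd k.+2 = odd k.
Proof. by rewrite !oddS negbK. Qed.

(* Stated over abstract values and instantiated by conversion: rewriting inside
   terms of type [AutT _] is very slow. *)
Lemma delta_of_node k (e : bool) (a b c : int) :
  delta_of k.+1 (e, if odd k.+1 then a else c, b) =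
  if odd k.+3 then (e, zmod (k.+3)./2 (a - b)) else (e, zmod (k.+3)./2 (PQ * c - 2 * b)).
Proof. by rewrite /delta_of odd_add2; case: (odd k.+1). Qed.

Lemma Delta_signature_node k (g : AutT k.+3) :
  Delta k.+3 g = delta_of k.+1 (signature k.+1 g).
Proof. exact: esym (delta_of_node k g.1.1 (psi k.+2 g.1.2) (psi k.+2 g.2) (psi k.+3 g)). Qed.

Lemma delta_of_base (e b : bool) :
  delta_of 0 (e, if b then 1 else 0, 0) = (e, if b then 1 else 0).
Proof. by rewrite /delta_of /zmod; congr pair; have := PQ_odd; case: b => /=; lia. Qed.

Lemma Delta_signature k (g : AutT k.+2) : Delta k.+2 g = delta_of k (signature k g).
Proof.
case: k g => [|k] g; last exact: Delta_signature_node.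
exact: esym (delta_of_base g.1.1 g.1.2.1.1).
Qed.

Lemma psi_odd_node k (g : AutT k.+2) : odd k ->
  psi k.+2 g = zdiv (k.+2)./2 (psi k.+1 g.1.2 + psi k.+1 g.2) PQ.
Proof.
case: k g => [//|k] g k_odd.
have k3_odd : odd k.+3 by rewrite odd_add2.
exact: etrans (psi_node k g) (ifT _ _ k3_odd).
Qed.

Definition signature_next k (f : bool) (vL vR : bool * int * int) : bool * int * int :=
  (f, if odd k then zdiv (k.+3)./2 (2 * (vL.1.2 + vR.1.2) - (if vL.1.1 then cPQ else 0)) (PQ * PQ)
      else vL.1.2,
      if odd k then zdiv (k.+2)./2 (vR.1.2 + vR.2) PQ else vR.1.2).

Lemma signature_next_spec k f eL eR (aL aR bL bR cL cR : int) :
  (odd k -> cR = zdiv (k.+2)./2 (aR + bR) PQ) ->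
  (f, if odd k.+1 then cL
      else if odd k.+3 then zdiv (k.+3)./2 (cL + cR) PQ
      else zdiv (k.+3)./2 (2 * (aL + aR) - (if eL then cPQ else 0)) (PQ * PQ), cR) =
  signature_next k f (eL, if odd k then aL else cL, bL) (eR, if odd k then aR else cR, bR).
Proof. by rewrite /signature_next odd_add2 oddS; case: (odd k) => //= ->. Qed.

Lemma signature_node k f (L R : AutT k.+2) :
  signature k.+1 (f, L, R) = signature_next k f (signature k L) (signature k R).
Proof.
exact: signature_next_spec k f L.1.1 R.1.1 (psi k.+1 L.1.2) (psi k.+1 R.1.2)
  (psi k.+1 L.2) (psi k.+1 R.2) (psi k.+2 L) (psi k.+2 R) (@psi_odd_node k R).
Qed.

Lemma psi_range n (g : AutT n) : 0 <= psi n g < (2 ^ n./2)%:Z.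
Proof.
case: n g => [|[|[|k]]] g //.
  by change (psi 2 g) with (if g.1.2.1.1 then 1 else 0 : int); case: ifP.
have zdiv_if_range (b : bool) m x y a a' :
  0 <= (if b then zdiv m x a else zdiv m y a') < (2 ^ m)%:Z by case: b; apply: zdiv_range.
exact: zdiv_if_range.
Qed.

Definition signature_box k := box (2 ^ (k.+2)./2) (2 ^ (k.+1)./2).

Lemma mem_signature_box k e (a c y : int) :
  0 <= a < (2 ^ (k.+1)./2)%:Z -> 0 <= c < (2 ^ (k.+2)./2)%:Z -> 0 <= y < (2 ^ (k.+1)./2)%:Z ->
  (e, if odd k then a else c, y) \in signature_box k.
Proof.
rewrite mem_box /= uphalf_half.
by case: (odd k); rewrite ?add0n ?add1n => a_small c_small ->; rewrite andbT.
Qed.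

Lemma signature_in_box k (g : AutT k.+2) : signature k g \in signature_box k.
Proof.
exact: mem_signature_box (psi_range k.+1 g.1.2) (psi_range k.+2 g) (psi_range k.+1 g.2).
Qed.

Definition transition k f v vL vR : bool :=
  (delta_of k vL == Phi p q (k.+2)./2 (delta_of k vR)) && (signature_next k f vL vR == v).

Lemma inJ_signature_node k f (L R : AutT k.+2) v :
  inJ k.+3 (f, L, R) && (signature k.+1 (f, L, R) == v) =
  [&& inJ k.+2 L, inJ k.+2 R & transition k f v (signature k L) (signature k R)].
Proof.
have transitionE (jL jR : bool) DL DR sL sR s :
    DL = delta_of k sL -> DR = delta_of k sR -> s = signature_next k f sL sR ->
    [&& jL, jR & DL == Phi p q (k.+2)./2 DR] && (s == v) =
    [&& jL, jR & transition k f v sL sR].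
  by move=> -> -> ->; case: jL; case: jR.
exact: transitionE (Delta_signature k L) (Delta_signature k R) (signature_node k f L R).
Qed.

Lemma transition_odd k j f e s t eL eR (xL yL xR yR : int) :
  odd k -> (k.+2)./2 = j -> 0 <= s < (2 ^ j.+1)%:Z -> 0 <= t < (2 ^ j)%:Z ->
  transition k f (e, s, t) (eL, xL, yL) (eR, xR, yR) =
  [&& ((2 ^ j)%:Z %| (yR - (PQ * t - xR))%R)%Z,
      ((2 ^ j.+1)%:Z %| ((PQ * PQ * s + (if eL then cPQ else 0) - 2 * xL) - 2 * xR)%R)%Z,
      eL == eR, ((2 ^ j)%:Z %| (yL - (PQ * PQ * s - xL - PQ * t))%R)%Z & f == e].
Proof.
move=> k_odd kj s_range t_range.
have k3j : (k.+3)./2 = j.+1 by rewrite -kj /= uphalf_half k_odd.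
rewrite /transition /delta_of /signature_next /Phi k_odd k3j kj /= !xpair_eqE.
rewrite zmod_subr eq_zmod (zdiv_eq _ _ _ _ PQ2_odd s_range) (zdiv_eq _ _ _ _ PQ_odd t_range).
case: (eL =P eR) => [<- | _]; last by rewrite /= !andbF.
set cL := if eL then cPQ else 0.
have -> : (PQ * t - (xR + yR) = - (yR - (PQ * t - xR)))%R by ring.
have -> : (PQ * PQ * s - (2 * (xL + xR) - cL) = PQ * PQ * s + cL - 2 * xL - 2 * xR)%R by ring.
rewrite rpredN; case xR_sol : (_ %| PQ * PQ * s + cL - 2 * xL - 2 * xR)%Z; last by rewrite !andbF.
case yR_sol : (_ %| yR - (PQ * t - xR))%Z; last by rewrite !andbF.
(* Given the congruences on [xR] and [yR], the one coming from [Delta] is the one on [yL]. *)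
rewrite /= !andbT; congr (_ && _); rewrite -[LHS]rpredN; apply: dvdz_eq_shift.
have -> : (- (xL - yL - (cL - (xR - yR))) - (yL - (PQ * PQ * s - xL - PQ * t)) =
           (PQ * PQ * s + cL - 2 * xL - 2 * xR) + (yR - (PQ * t - xR)))%R by ring.
by rewrite rpredD // (dvdz_trans _ xR_sol) // pow2S dvdz_mull.
Qed.

Lemma transition_even k m f e a b eL eR (xL yL xR yR : int) :
  ~~ odd k -> k./2 = m ->
  transition k f (e, a, b) (eL, xL, yL) (eR, xR, yR) =
  [&& ((2 ^ m.+1)%:Z %| ((PQ * a - 2 * yL - (if eL then cPQ else 0) + PQ * b) - 2 * yR)%R)%Z,
      xR == b, eL == eR, xL == a & f == e].
Proof.
move=> k_even km.
rewrite /transition /delta_of /signature_next /Phi (negbTE k_even) /= km !xpair_eqE.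
rewrite zmod_subr eq_zmod.
case: (eL =P eR) => [<- | _]; last by rewrite /= !andbF.
case: (xL =P a) => [-> | _]; last by rewrite /= !andbF.
case: (xR =P b) => [-> | _]; last by rewrite /= !andbF.
set cL := if eL then cPQ else 0.
have -> : PQ * a - 2 * yL - (cL - (PQ * b - 2 * yR)) = PQ * a - 2 * yL - cL + PQ * b - 2 * yR.
  by ring.
by rewrite /= !andbT.
Qed.

Lemma count_transitions k v : v \in signature_box k.+1 ->
  (\sum_(f : bool) \sum_(vL <- signature_box k) \sum_(vR <- signature_box k)
     transition k f v vL vR = 2 ^ (k.+1)./2)%N.
Proof.
case: v => [[e s] t]; rewrite mem_box /= => /andP[s_range t_range].
rewrite /signature_box /= uphalf_half in s_range *.
have [k_odd | k_even] := boolP (odd k).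
  rewrite k_odd add1n in s_range *.
  rewrite -[RHS](count_odd_level PQ cPQ s t (k./2).+1 e cPQ_odd).
  apply: eq_bigr => f _; rewrite big_box; do 3 (apply: eq_bigr => ? _).
  by rewrite big_box; do 3 (apply: eq_bigr => ? _); rewrite (@transition_odd k (k./2).+1).
rewrite (negbTE k_even) add0n in s_range *.
rewrite -[RHS](count_even_level PQ cPQ s t (k./2) e cPQ_odd s_range t_range).
apply: eq_bigr => f _; rewrite big_box; do 3 (apply: eq_bigr => ? _).
by rewrite big_box; do 3 (apply: eq_bigr => ? _); rewrite (@transition_even k k./2).
Qed.

Local Notation signature_equidistributed k C :=
  (equidistributed (signature_box k) (inJ k.+2) (signature k) C).

Lemma fibre_node k v : (#|[pred g | inJ k.+3 g & signature k.+1 g == v]| =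
  \sum_(f : bool) \sum_(L | inJ k.+2 L) \sum_(R | inJ k.+2 R)
    transition k f v (signature k L) (signature k R))%N.
Proof.
rewrite card_pred_sum sum_AutT_node; apply: eq_bigr => f _.
rewrite [RHS]big_mkcond; apply: eq_bigr => L _.
under eq_bigr => R _ do rewrite inJ_signature_node.
case: (inJ k.+2 L); last by rewrite big1.
by rewrite [RHS]big_mkcond; apply: eq_bigr => R _; case: (inJ k.+2 R).
Qed.

Lemma signature_equidistributed_step {k C} : signature_equidistributed k C ->
  signature_equidistributed k.+1 (C * C * 2 ^ (k.+1)./2).
Proof.
move=> equiC; split=> [g _ | v v_box]; first exact: signature_in_box.
rewrite fibre_node.
under eq_bigr => f _ do under eq_bigr => L _ do
  rewrite (sum_equidistributed _ _ _ _ (transition k f v (signature k L)) (box_uniq _ _) equiC).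
under eq_bigr => f _ do
  rewrite (sum_equidistributed _ _ _ _
             (fun vL => C * \sum_(vR <- signature_box k) transition k f v vL vR)%N
             (box_uniq _ _) equiC) -big_distrr mulnA.
by rewrite -big_distrr /= count_transitions.
Qed.

Lemma signature_equidistributed_base : signature_equidistributed 0 1.
Proof.
split=> [g _ | [[e x] y]]; first exact: signature_in_box.
rewrite mem_box => /andP[/= x_range /= y_range].
have -> : y = 0 by lia.
rewrite card_pred_sum (sum_AutT_node 1) big_bool !sum_AutT1.
have [-> | ->] : x = 0 \/ x = 1 by lia.
all: by case: e; vm_compute.
Qed.

Lemma signature_equidistributed_all k : exists C, signature_equidistributed k C.
Proof.
elim: k => [|k [C equiC]]; first by exists 1%N; apply: signature_equidistributed_base.
by exists (C * C * 2 ^ (k.+1)./2)%N; apply: signature_equidistributed_step.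
Qed.

Lemma card_J_equidistributed {k C} : signature_equidistributed k C ->
  #|J p q k.+2| = (C * (2 * 2 ^ (k.+2)./2 * 2 ^ (k.+1)./2))%N.
Proof.
move=> equiC; rewrite /J cardsE card_pred_sum -big_mkcond /=.
rewrite (sum_equidistributed _ _ _ _ (fun _ => 1%N) (box_uniq _ _) equiC).
by rewrite sum1_size size_box.
Qed.

End Recursion.

Lemma card_J1 p q : #|J p q 1| = 2.
Proof. by rewrite /J cardsE card_pred_sum sum_AutT1. Qed.

Lemma dihedral_orderE m : dihedral_order m = (2 * 2 ^ m)%N.
Proof. by rewrite /dihedral_order card_prod card_bool card_ord. Qed.

Local Close Scope ring_scope.

Theorem lemma4 (p q : nat) :
  (0 < p)%N -> (0 < q)%N -> odd (p + q) ->
  forall n : nat, (2 <= n)%N ->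
    (#|J p q n| * dihedral_order ((n.-1)./2) = 2 * #|J p q n.-1| ^ 2)%N.
Proof.
(* Only the parity of [p + q] matters. *)
move=> _ _ pq_odd [|[|[|k]]] // _; rewrite dihedral_orderE.
  by rewrite (card_J_equidistributed (signature_equidistributed_base pq_odd)) card_J1.
have [C equiC] := signature_equidistributed_all pq_odd k.
rewrite (card_J_equidistributed (signature_equidistributed_step pq_odd equiC)).
rewrite (card_J_equidistributed equiC) -[(k.+3)./2]/((k.+1)./2).+1 expnS /=.
ring.
Qed.
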